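(* Let $\mathcal{A}=(\Sigma,Q,q_0,\delta,F)$ be an alternating safety automaton and $p\in\Sigma$. If no two states of $\mathcal{A}$ are existentially in conflict for $p$, then $\mathcal{A}$ is in existential normal form for $p$, i.e. $\mathcal{L}(\exists^\circ p.\mathcal{A})=\mathcal{L}(\exists p.\mathcal{A})$.
   Context: $\Sigma$ is a finite set of Boolean variables; words are $w\in(2^\Sigma)^\omega$ with $k$-th letter $w[k]$. $L_\Sigma=\Sigma\cup\{\neg a:a\in\Sigma\}$; in a letter $\sigma$, $a$ is true iff $a\in\sigma$ and $\neg a$ iff $a\notin\sigma$. An alternating Büchi automaton $\mathcal{A}=(\Sigma,Q,q_0,\delta,F)$ has finite $Q$, $q_0\in Q$, $F\subseteq Q$ and $\delta:Q\to\mathbb{B}^+(Q\cup L_\Sigma)$ (positive Boolean formulas with $\wedge,\vee$, true, false over atoms in $Q\cup L_\Sigma$). $X\subseteq Q\cup L_\Sigma$ satisfies $\delta(q)$ if $\delta(q)$ is true when exactly the atoms of $X$ are true; $\mathit{mSat}(\delta(q))$ is the set of minimal satisfying sets. A run on $w$ is a $Q$-labeled tree with root labeled $q_0$ such that for each node at depth $k$ labeled $q$, with $S$ the labels of its children, $S\cup\{\ell\in L_\Sigma:\ell\text{ true in }w[k]\}$ satisfies $\delta(q)$; accepting if every infinite branch visits $F$ infinitely often; $\mathcal{L}(\mathcal{A})$ is the set of words with an accepting run. $\mathcal{A}$ is a safety automaton if $F=Q$. $\mathcal{L}(\exists p.\mathcal{A})$ is the set of $w\in(2^{\Sigma\setminus\{p\}})^\omega$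 such that some $w'\in(2^\Sigma)^\omega$ with $w'[k]\setminus\{p\}=w[k]$ for all $k$ lies in $\mathcal{L}(\mathcal{A})$. $\exists^\circ p.\mathcal{A}=(\Sigma\setminus\{p\},Q,q_0,\delta',F)$ with $\delta'(q)=\delta(q)[p\mapsto1]\vee\delta(q)[p\mapsto0]$, where $B[p\mapsto1]$ replaces atom $p$ by true and $\neg p$ by false, and $B[p\mapsto0]$ the reverse. An existential unfolding of $\mathcal{A}$ is a DAG $(V,E)$ with $V\subseteq(Q\cup L_\Sigma)\times\mathbb{N}$, $(q_0,0)\in V$, edges only from $Q\times\{i\}$ to $(Q\cup L_\Sigma)\times\{i+1\}$, where $V,E$ are the smallest sets such that for every $(q,i)\in V$ with $q\in Q$ there is a chosen $X\in\mathit{mSat}(\delta(q))$ with $X\times\{i+1\}\subseteq V$ and $\{(q,i)\}\times(X\times\{i+1\})\subseteq E$ (exactly the successors of $(q,i)$). $\mathit{reach}(v)$ denotes the vertices reachable from $v$ by a (possibly empty) path. Two states $q,q'$ are existentially in conflict for $p$ if there exist an existential unfolding $(V,E)$ and $i\in\mathbb{N}$ with $(q,i),(q',i)\in V$, and $i'\in\mathbb{N}$ with $(p,i')\in\mathit{reach}(q,i)$ and $(\neg p,i')\in\mathit{reach}(q',i)$. *)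

From mathcomp Require Import all_boot.
Set Implicit Arguments. Unset Strict Implicit. Unset Printing Implicit Defensive.

(* Atoms Q ∪ L_Σ : inl q = state q ; inr (inl a) = literal a ; inr (inr a) = literal ¬a *)
Definition atom (Q Var : finType) : finType := (Q + (Var + Var))%type.
Definition AQ {Q Var : finType} (q : Q) : atom Q Var := inl q.
Definition APos {Q Var : finType} (a : Var) : atom Q Var := inr (inl a).
Definition ANeg {Q Var : finType} (a : Var) : atom Q Var := inr (inr a).

Inductive pbf (A : Type) : Type :=
| PTrue | PFalse | PAt of A | PAnd of pbf A & pbf A | POr of pbf A & pbf A.
Arguments PTrue {A}. Arguments PFalse {A}.

Fixpoint sat {A : Type} (X : A -> Prop) (f : pbf A) : Prop :=
  match f with
  | PTrue => True
  | PFalse => False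
  | PAt x => X x
  | PAnd g h => sat X g /\ sat X h
  | POr g h => sat X g \/ sat X h
  end.

Definition is_mSat {A : finType} (f : pbf A) (X : {set A}) : Prop :=
  sat (fun x => x \in X) f /\
  forall Y : {set A}, Y \subset X -> sat (fun x => x \in Y) f -> Y = X.

Section Automata.
Variables (Var Q : finType).

Definition word := nat -> {set Var}.

Definition lit_true (sigma : {set Var}) (x : atom Q Var) : Prop :=
  match x with
  | inl _ => False
  | inr (inl a) => a \in sigma
  | inr (inr a) => a \notin sigma
  end.

(* Runs: Q-labelled trees. Nodes are finite sequences of child indices,
   T is the (prefix-closed) set of nodes, lab the labelling; a node v has depth size v. *)
Definition is_run (q0 : Q) (delta : Q -> pbf (atom Q Var)) (w : word)
    (T : seq nat -> Prop) (lab : seq nat -> Q) : Prop :=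
  [/\ T [::], lab [::] = q0,
      (forall v i, T (rcons v i) -> T v) &
      forall v, T v ->
        sat (fun x : atom Q Var => match x with
                 | inl q => exists i, T (rcons v i) /\ lab (rcons v i) = q
                 | inr _ => lit_true (w (size v)) x
                 end) (delta (lab v))].

Definition accepting_run (F : {set Q}) (T : seq nat -> Prop) (lab : seq nat -> Q) : Prop :=
  forall b : nat -> nat, (forall n, T (mkseq b n)) ->
    forall N, exists2 n, N <= n & lab (mkseq b n) \in F.

Definition accepts (q0 : Q) (delta : Q -> pbf (atom Q Var)) (F : {set Q}) (w : word) : Prop :=
  exists T lab, is_run q0 delta w T lab /\ accepting_run F T lab.

Definition safety (F : {set Q}) : Prop := F = setT.

Fixpoint psubst (p : Var) (b : bool) (f : pbf (atom Q Var)) : pbf (atom Q Var) :=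
  match f with
  | PTrue => PTrue
  | PFalse => PFalse
  | PAt (inl q) => PAt (inl q)
  | PAt (inr (inl a)) => if a == p then (if b then PTrue else PFalse) else PAt (APos a)
  | PAt (inr (inr a)) => if a == p then (if b then PFalse else PTrue) else PAt (ANeg a)
  | PAnd g h => PAnd (psubst p b g) (psubst p b h)
  | POr g h => POr (psubst p b g) (psubst p b h)
  end.

Definition delta_exc (p : Var) (delta : Q -> pbf (atom Q Var)) (q : Q) : pbf (atom Q Var) :=
  POr (psubst p true (delta q)) (psubst p false (delta q)).

(* words over Σ \ {p}, encoded as words over Σ never containing p *)
Definition word_without (p : Var) (w : word) : Prop := forall k, p \notin w k.

Definition lang_exc (p : Var) (q0 : Q) (delta : Q -> pbf (atom Q Var)) (F : {set Q})
    (w : word) : Prop :=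
  word_without p w /\ accepts q0 (delta_exc p delta) F w.

Definition lang_ex (p : Var) (q0 : Q) (delta : Q -> pbf (atom Q Var)) (F : {set Q})
    (w : word) : Prop :=
  word_without p w /\
  exists w' : word, (forall k, w' k :\ p = w k) /\ accepts q0 delta F w'.

(* An unfolding is determined by the choice
   ch q i of a minimal satisfying set at each vertex (q,i) ∈ Q × nat. *)
Inductive inV (q0 : Q) (ch : Q -> nat -> {set atom Q Var}) : atom Q Var -> nat -> Prop :=
| inV_root : inV q0 ch (AQ q0) 0
| inV_step q i x : inV q0 ch (AQ q) i -> x \in ch q i -> inV q0 ch x i.+1.

Definition inE (q0 : Q) (ch : Q -> nat -> {set atom Q Var})
    (u v : atom Q Var * nat) : Prop :=
  exists q, [/\ u.1 = AQ q, inV q0 ch (AQ q) u.2, v.2 = u.2.+1 & v.1 \in ch q u.2].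

Definition is_ex_unfolding (q0 : Q) (delta : Q -> pbf (atom Q Var))
    (ch : Q -> nat -> {set atom Q Var}) : Prop :=
  forall q i, inV q0 ch (AQ q) i -> is_mSat (delta q) (ch q i).

Inductive reach (q0 : Q) (ch : Q -> nat -> {set atom Q Var}) (u : atom Q Var * nat) :
    atom Q Var * nat -> Prop :=
| reach_refl : reach q0 ch u u
| reach_step v v' : reach q0 ch u v -> inE q0 ch v v' -> reach q0 ch u v'.

Definition ex_conflict (q0 : Q) (delta : Q -> pbf (atom Q Var)) (p : Var) (q q' : Q) : Prop :=
  exists ch, is_ex_unfolding q0 delta ch /\
  exists i, inV q0 ch (AQ q) i /\ inV q0 ch (AQ q') i /\
  exists i', reach q0 ch (AQ q, i) (APos p, i') /\ reach q0 ch (AQ q', i) (ANeg p, i').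

End Automata.

From mathcomp Require Import all_boot.
From Stdlib Require Import ClassicalEpsilon.
Set Implicit Arguments. Unset Strict Implicit. Unset Printing Implicit Defensive.

(** A run of ∃°p.A on w fixes the value of p separately at every node, so
    nodes at the same depth may disagree.  Choosing at each (q, k) from which
    ∃°p.A still has a run a minimal satisfying set of δ(q) compatible with w
    (up to p) gives an existential unfolding.  Without conflicts, p and ¬p are
    never both required at the same depth, so adding p to the k-th letter
    exactly when it is required positively yields a word w' on which the
    unfolding is a run of A; as A is a safety automaton, that run accepts.
    Conversely, a run of A on w' is a run of ∃°p.A on w with the same tree,
    each node taking the disjunct given by the value of p in w'. *)

Section PositiveFormulas.
Variable A : Type.

Lemma sat_mono (P P' : A -> Prop) (f : pbf A) :
  (forall x, P x -> P' x) -> sat P f -> sat P' f.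
Proof.
move=> PP'; elim: f => //= [g IHg h IHh|g IHg h IHh].
  by case=> /IHg ? /IHh ?; split.
by case=> [/IHg|/IHh]; [left|right].
Qed.

End PositiveFormulas.

Section MinimalSatisfyingSets.
Variable A : finType.

Fixpoint bsat (X : {set A}) (f : pbf A) : bool :=
  match f with
  | PTrue => true
  | PFalse => false
  | PAt x => x \in X
  | PAnd g h => bsat X g && bsat X h
  | POr g h => bsat X g || bsat X h
  end.

Lemma bsatP (X : {set A}) (f : pbf A) : reflect (sat (fun x => x \in X) f) (bsat X f).
Proof.
elim: f => /= [||x|g IHg h IHh|g IHg h IHh]; try by constructor.
- exact: idP.
- by apply: (iffP andP) => -[/IHg ? /IHh ?].
- by apply: (iffP orP) => -[/IHg|/IHh]; by [left|right].
Qed.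

Lemma mSat_sub_exists (S : {set A}) (f : pbf A) :
  sat (fun x => x \in S) f -> exists2 X, is_mSat f X & X \subset S.
Proof.
move=> /bsatP satS.
have [X /minsetP [/bsatP satX minX] sXS] := minset_exists (P := bsat^~ f) satS.
by exists X => //; split=> // Y sYX /bsatP satY; apply: minX.
Qed.

Lemma mSat_exists (P : A -> Prop) (f : pbf A) :
  sat P f -> exists2 X, is_mSat f X & {in X, forall x, P x}.
Proof.
pose S := [set x | is_left (excluded_middle_informative (P x))].
have inS x : x \in S <-> P x by rewrite inE; case: excluded_middle_informative.
move=> /(sat_mono (fun x => (inS x).2)) /mSat_sub_exists [X mX sXS].
by exists X => // x /(subsetP sXS) /inS.
Qed.

End MinimalSatisfyingSets.

Section Automata.
Variables (Var Q : finType).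
Implicit Types (q : Q) (delta : Q -> pbf (atom Q Var)) (w : word Var)
  (P : atom Q Var -> Prop) (f : pbf (atom Q Var)).

Definition plit_eval (p : Var) (b : bool) P (x : atom Q Var) : Prop :=
  match x with
  | inl _ => P x
  | inr (inl a) => if a == p then is_true b else P x
  | inr (inr a) => if a == p then is_true (~~ b) else P x
  end.

Lemma sat_psubst (p : Var) (b : bool) P f :
  sat P (psubst p b f) <-> sat (plit_eval p b P) f.
Proof.
elim: f => //= [[q|[a|a]]|g IHg h IHh|g IHg h IHh] //=.
- by case: eqP => _; case: b.
- by case: eqP => _; case: b.
- by split=> -[/IHg ? /IHh ?].
- by split=> -[/IHg|/IHh]; by [left|right].
Qed.

Lemma sat_delta_exc (p : Var) delta P q :
  sat P (delta_exc p delta q) <-> exists b, sat P (psubst p b (delta q)).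
Proof. by split=> [[]|[[] ?]]; [exists true|exists false|left|right]. Qed.

Lemma run_subtree delta q w w' T lab i :
  (forall n, w' n = w n.+1) -> is_run q delta w T lab -> T [:: i] ->
  is_run (lab [:: i]) delta w' (fun v => T (i :: v)) (fun v => lab (i :: v)).
Proof.
move=> w'E [_ _ Tpre Tsat] Ti; split=> // [v j|v Tv]; first exact: (Tpre (i :: v)).
by apply: sat_mono (Tsat _ Tv) => -[q'|x] //=; rewrite w'E.
Qed.

Lemma run_exc_of_run delta (p : Var) q w w' T lab :
  (forall k, w' k :\ p = w k) -> is_run q delta w' T lab ->
  is_run q (delta_exc p delta) w T lab.
Proof.
move=> w'E [? ? ? Tsat]; split=> // v /Tsat satv.
apply/sat_delta_exc; exists (p \in w' (size v)); apply/sat_psubst.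
by apply: sat_mono satv => -[q'|[a|a]] //=; case: eqP => [-> //|/eqP ap]; rewrite -w'E in_setD1 ap.
Qed.

Lemma lang_ex_sub_exc (p : Var) q0 delta (F : {set Q}) w :
  lang_ex p q0 delta F w -> lang_exc p q0 delta F w.
Proof.
case=> wp [w' [w'E [T [lab [run acc]]]]]; split=> //.
by exists T, lab; split=> //; apply: run_exc_of_run run.
Qed.

Lemma ex_conflict_at q0 delta (p : Var) ch q q' k :
  is_ex_unfolding q0 delta ch -> inV q0 ch (AQ q) k -> inV q0 ch (AQ q') k ->
  APos p \in ch q k -> ANeg p \in ch q' k -> ex_conflict q0 delta p q q'.
Proof.
move=> unf Vq Vq' pq pq'; exists ch; split=> //; exists k; do 2!split=> //.
by exists k.+1; split; apply: reach_step (reach_refl _ _ _) _; [exists q|exists q'].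
Qed.

End Automata.

Section Witness.
Variables (Var Q : finType) (q0 : Q) (delta : Q -> pbf (atom Q Var)) (p : Var).
Variable w : word Var.
Hypothesis wp : word_without p w.

Definition runs_from (q : Q) (k : nat) : Prop :=
  exists T lab, is_run q (delta_exc p delta) (fun n => w (k + n)) T lab.

(* The literals of p are left unconstrained: the value of p at depth k is
   fixed afterwards, by [witness]. *)
Definition viable (k : nat) (x : atom Q Var) : Prop :=
  match x with
  | inl q => runs_from q k.+1
  | inr (inl a) => a != p -> a \in w k
  | inr (inr a) => a != p -> a \notin w k
  end.

Definition viable_choice (q : Q) (k : nat) (X : {set atom Q Var}) : Prop :=
  is_mSat (delta q) X /\ {in X, forall x, viable k x}.

Lemma viable_choice_exists q k : runs_from q k -> exists X, viable_choice q k X.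
Proof.
case=> T [lab run]; have [T0 <- _ /(_ _ T0) sat0] := run.
have /sat_delta_exc [b /sat_psubst /mSat_exists [X mX Xv]] :
    sat (fun x => match x with
                  | inl q' => runs_from q' k.+1
                  | inr _ => lit_true (w k) x
                  end) (delta_exc p delta (lab [::])).
  apply: sat_mono sat0 => -[q'|x] /=; last by rewrite addn0.
  case=> i [Ti <-]; exists (fun v => T (i :: v)), (fun v => lab (i :: v)).
  by apply: run_subtree run Ti => n; rewrite addnS.
by exists X; split=> // -[q'|[a|a]] /Xv //=; case: eqP.
Qed.

Definition unfolding (q : Q) (k : nat) : {set atom Q Var} :=
  epsilon (inhabits set0) (viable_choice q k).

Lemma unfoldingP q k : runs_from q k -> viable_choice q k (unfolding q k).
Proof. by move/viable_choice_exists; apply: epsilon_spec. Qed.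

Hypothesis run0 : runs_from q0 0.

Lemma inV_runs_from q k : inV q0 unfolding (AQ q) k -> runs_from q k.
Proof.
move Eq: (AQ q) => x Vx; elim: Vx q Eq => [q [->] //|q' i y _ IH yX q Eq].
by have [_ /(_ y yX)] := unfoldingP (IH q' erefl); rewrite -Eq.
Qed.

Lemma unfolding_is_ex_unfolding : is_ex_unfolding q0 delta unfolding.
Proof. by move=> q k /inV_runs_from /unfoldingP []. Qed.

Hypothesis no_conflict : forall q q', ~ ex_conflict q0 delta p q q'.

Definition p_required (k : nat) : Prop :=
  exists2 q, inV q0 unfolding (AQ q) k & APos p \in unfolding q k.

Definition witness (k : nat) : {set Var} :=
  if excluded_middle_informative (p_required k) then p |: w k else w k.

Lemma witness_erase k : witness k :\ p = w k.
Proof.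
rewrite /witness; case: excluded_middle_informative => [?|?] /=.
  exact: setU1K (wp k).
by apply/setP=> a; rewrite in_setD1; case: eqP => // ->; rewrite (negbTE (wp k)).
Qed.

Lemma in_witness a k : a != p -> (a \in witness k) = (a \in w k).
Proof. by move=> ap; rewrite -(witness_erase k) in_setD1 ap. Qed.

Lemma p_in_witness q k :
  inV q0 unfolding (AQ q) k -> APos p \in unfolding q k -> p \in witness k.
Proof.
move=> Vq pq; rewrite /witness; case: excluded_middle_informative => [?|npk] /=.
  exact: setU11.
by case: npk; exists q.
Qed.

Lemma p_notin_witness q k :
  inV q0 unfolding (AQ q) k -> ANeg p \in unfolding q k -> p \notin witness k.
Proof.
move=> Vq npq; rewrite /witness; case: excluded_middle_informative => [[q' Vq' pq']|?] /=.
  by case: (no_conflict (ex_conflict_at unfolding_is_ex_unfolding Vq' Vq pq' npq)).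
exact: wp.
Qed.

(* The run tree of A on [witness] is the part of [unfolding] reachable from
   (q0, 0); a node is a path in it, child index i standing for the i-th state
   of [enum Q]. *)
Definition state_of (i : nat) : Q := nth q0 (enum Q) i.

Lemma state_of_index q : state_of (index q (enum Q)) = q.
Proof. by rewrite /state_of nth_index ?mem_enum. Qed.

Fixpoint follow (q : Q) (k : nat) (v : seq nat) : option Q :=
  if v is i :: v' then
    if AQ (state_of i) \in unfolding q k then follow (state_of i) k.+1 v' else None
  else Some q.

Lemma follow_rcons q k v i :
  follow q k (rcons v i) =
  if follow q k v is Some q' then
    if AQ (state_of i) \in unfolding q' (k + size v) then Some (state_of i) else None
  else None.
Proof.
elim: v q k => [|j v IH] q k /=; first by rewrite addn0.
by case: ifP => // _; rewrite IH addSnnS.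
Qed.

Lemma follow_inV v q : follow q0 0 v = Some q -> inV q0 unfolding (AQ q) (size v).
Proof.
elim/last_ind: v q => [|v i IH] q /=; first by case=> <-; apply: inV_root.
rewrite follow_rcons size_rcons; case E: (follow q0 0 v) => [q'|] //.
by case: ifP => // iX [<-]; apply: inV_step (IH _ E) iX.
Qed.

Lemma witness_run :
  is_run q0 delta witness (fun v => follow q0 0 v) (fun v => odflt q0 (follow q0 0 v)).
Proof.
split=> // [v i|v]; first by rewrite follow_rcons; case: follow.
case E: (follow q0 0 v) => [q|] // _ /=.
have Vq := follow_inV E; have [[satX _] Xv] := unfoldingP (inV_runs_from Vq).
apply: sat_mono satX => -[q'|[a|a]] xX /=.
- exists (index q' (enum Q)).
  by rewrite follow_rcons E add0n state_of_index xX.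
- case: (eqVneq a p) xX => [->|ap] xX; first exact: p_in_witness Vq xX.
  by rewrite in_witness //; apply: Xv xX ap.
- case: (eqVneq a p) xX => [->|ap] xX; first exact: p_notin_witness Vq xX.
  by rewrite in_witness //; apply: Xv xX ap.
Qed.

Lemma witness_accepts (F : {set Q}) : safety F -> accepts q0 delta F witness.
Proof.
move=> ->; exists (fun v => follow q0 0 v), (fun v => odflt q0 (follow q0 0 v)).
by split; [exact: witness_run | move=> b _ N; exists N; rewrite ?inE].
Qed.

End Witness.

Lemma lang_exc_sub_ex (Var Q : finType) (q0 : Q) (delta : Q -> pbf (atom Q Var))
    (F : {set Q}) (p : Var) (w : word Var) :
  safety F -> (forall q q', ~ ex_conflict q0 delta p q q') ->
  lang_exc p q0 delta F w -> lang_ex p q0 delta F w.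
Proof.
move=> sF nc [wp [T [lab [run _]]]]; split=> //.
have run0 : runs_from delta p w q0 0 by exists T, lab.
by exists (witness q0 delta p w); split; [exact: witness_erase | exact: witness_accepts].
Qed.

Theorem mainTheorem4 (Var Q : finType) (q0 : Q) (delta : Q -> pbf (atom Q Var))
    (F : {set Q}) (p : Var) :
  safety F ->
  (forall q q' : Q, ~ ex_conflict q0 delta p q q') ->
  forall w : word Var,
    lang_exc p q0 delta F w <-> lang_ex p q0 delta F w.
Proof.
move=> sF nc w; split; [exact: lang_exc_sub_ex | exact: lang_ex_sub_exc].
Qed.
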